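(* Let $L_1,\dots,L_r$ be linear functionals on complex Laurent polynomials satisfying $L_j[w^k]=L_j[w^{-k}]$ for all $k\in\mathbb N$ and all $j$. Then for $(\bm n;\bm m)\in\mathfrak C_{2r}$, $(\bm n;\bm m)$ is normal if and only if $(\bm m;\bm n)$ is normal, and in that case $\Phi^*_{\bm n;\bm m}(z)=\Phi_{\bm m;\bm n}(1/z)$, $\bm\Xi^*_{\bm n;\bm m}(z)=\bm\Xi_{\bm m;\bm n}(1/z)$, $\alpha_{\bm n;\bm m}=\beta_{\bm m;\bm n}$, $\rho_{\bm n;\bm m,j}=\sigma_{\bm m;\bm n,j}$ (whenever these are defined), and $\gamma^{k\ell}_{\bm n;\bm m}=\eta^{k\ell}_{\bm m;\bm n}$ (whenever these are defined).
   Context: Fix $r\ge1$; $\mathbb N=\{0,1,2,\dots\}$; $\bm e_j$ is the $j$-th standard unit vector of $\mathbb Z^r$; for $\bm v\in\mathbb Z^r$, $|\bm v|=v_1+\dots+v_r$ (signed). Let $c_{k,j}=L_j[w^{-k}]$. $\mathfrak C_{2r}=\{(\bm n;\bm m)\in\mathbb Z^r\times\mathbb Z^r:n_j+m_j\ge0\ \forall j\}$. For $(\bm n;\bm m)\in\mathfrak C_{2r}$, $\bm n\ne-\bm m$, $T_{\bm n;\bm m}$ is the square matrix of size $|\bm n|+|\bm m|$ with rows indexed by $(j,k)$, $1\le j\le r$, $-m_j\le k\le n_j-1$ (ordered by $j$, then increasing $k$), columns indexed by $i=-|\bm m|,\dots,|\bm n|-1$, entries $c_{k-i,j}$; $T_{\bm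 n;-\bm n}:=1$; normal means $\det T_{\bm n;\bm m}\ne0$. For normal $(\bm n;\bm m)$, $\bm n\ne-\bm m$: $\Phi_{\bm n;\bm m}$ is the unique Laurent polynomial in $\operatorname{span}\{z^k\}_{k=-|\bm m|}^{|\bm n|}$ with $z^{|\bm n|}$-coefficient $1$ and $L_j[\Phi_{\bm n;\bm m}(w)w^{-k}]=0$ for $-m_j\le k\le n_j-1$, all $j$; $\Phi^*_{\bm n;\bm m}$ is the unique one in that span with $z^{-|\bm m|}$-coefficient $1$ and $L_j[\Phi^*_{\bm n;\bm m}(w)w^{-k}]=0$ for $-m_j+1\le k\le n_j$; $\bm\Xi_{\bm n;\bm m}=(\Xi_{\bm n;\bm m,j})_{j=1}^r$ is the unique vector with $\Xi_{\bm n;\bm m,j}\in\operatorname{span}\{z^k\}_{k=-n_j}^{m_j-1}$, $\sum_jL_j[\Xi_{\bm n;\bm m,j}(w)w^{-k}]=0$ for $-|\bm n|+1\le k\le|\bm m|-1$ and $=1$ for $k=-|\bm n|$; $\bm\Xi^*_{\bm n;\bm m}$ is the unique vector with $\Xi^*_{\bm n;\bm m,j}\in\operatorname{span}\{z^k\}_{k=-n_j+1}^{m_j}$, the same vanishing conditions, and $=1$ for $k=|\bm m|$. For $\bm n=-\bm m$: $\Phi=\Phi^*=1$, $\bm\Xi=\bm\Xi^*=\bm0$. $\alpha_{\bm n;\bm m}$ := $z^{-|\bm m|}$-coefficient of $\Phi_{\bm n;\bm m}$; $\beta_{\bm n;\bm m}$ := $z^{|\bm n|}$-coefficient of $\Phi^*_{\bm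 n;\bm m}$. $\rho_{\bm n;\bm m,j}=L_j[\Phi_{\bm n;\bm m}(w)w^{-n_j}]/L_j[\Phi_{\bm n-\bm e_j;\bm m}(w)w^{-n_j+1}]$ (defined when $(\bm n;\bm m),(\bm n-\bm e_j;\bm m)\in\mathfrak C_{2r}$ are normal) and $\sigma_{\bm n;\bm m,j}=L_j[\Phi^*_{\bm n;\bm m}(w)w^{m_j}]/L_j[\Phi^*_{\bm n;\bm m-\bm e_j}(w)w^{m_j-1}]$ (defined when $(\bm n;\bm m),(\bm n;\bm m-\bm e_j)\in\mathfrak C_{2r}$ are normal). For $k\ne\ell$: $\gamma^{k\ell}_{\bm n;\bm m}=L_\ell[\Phi_{\bm n+\bm e_k;\bm m}(w)w^{-n_\ell}]/L_\ell[\Phi_{\bm n;\bm m}(w)w^{-n_\ell}]$ (defined when $(\bm n;\bm m),(\bm n+\bm e_k;\bm m),(\bm n+\bm e_\ell;\bm m)$ are normal) and $\eta^{k\ell}_{\bm n;\bm m}=L_\ell[\Phi^*_{\bm n;\bm m+\bm e_k}(w)w^{m_\ell}]/L_\ell[\Phi^*_{\bm n;\bm m}(w)w^{m_\ell}]$ (defined when $(\bm n;\bm m),(\bm n;\bm m+\bm e_k),(\bm n;\bm m+\bm e_\ell)$ are normal). *)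

From HB Require Import structures.
From mathcomp Require Import all_boot all_order all_algebra.
From mathcomp Require Import complex.
From mathcomp Require Import reals.
From Stdlib Require Import ClassicalEpsilon.
Set Implicit Arguments.
Unset Strict Implicit.
Unset Printing Implicit Defensive.
Import Order.TTheory GRing.Theory Num.Theory.
Local Open Scope ring_scope.

Section Defs.
Variable R : realType.
Variable r : nat.
(* L j i = L_j[w^i]: a linear functional on complex Laurent polynomials is
   determined by (and determines) its values on the monomial basis w^i. *)
Variable L : 'I_r -> int -> R[i].

Definition ent (v : 'rV[int]_r) (j : 'I_r) : int := v ord0 j.
Definition vabs (v : 'rV[int]_r) : int := \sum_(j < r) ent v j.
Definition evec (j : 'I_r) : 'rV[int]_r := delta_mx ord0 j.

Definition inC2r (n m : 'rV[int]_r) : Prop := forall j, 0 <= ent n j + ent m j.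

Definition irange (a b : int) : seq int :=
  if b < a then [::] else [seq a + (t%:Z) | t <- iota 0 (absz (b - a)).+1].

(* L applied to P(w) w^{-k}, for P in span{z^i}_{i=a..b} (coefficients P i) *)
Definition Lapp (j : 'I_r) (a b : int) (P : int -> R[i]) (k : int) : R[i] :=
  \sum_(i <- irange a b) P i * L j (i - k).

Definition cmom (k : int) (j : 'I_r) : R[i] := L j (- k).

Definition Trows (n m : 'rV[int]_r) : seq ('I_r * int) :=
  flatten [seq [seq (j, k) | k <- irange (- ent m j) (ent n j - 1)] | j <- enum 'I_r].

Definition Tsize (n m : 'rV[int]_r) : nat := absz (vabs n + vabs m).

(* T_{n;m}: column b corresponds to i = -|m| + b, entries c_{k-i,j} *)
Definition Tmat (n m : 'rV[int]_r) : 'M[R[i]]_(Tsize n m) :=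
  \matrix_(a < Tsize n m, b < Tsize n m)
    match onth (Trows n m) a with
    | Some (j, k) => cmom (k - (- vabs m + b%:Z)) j
    | None => 0
    end.

Definition normal (n m : 'rV[int]_r) : Prop :=
  if n == - m then True else \det (Tmat n m) != 0.

Definition supported (a b : int) (P : int -> R[i]) : Prop :=
  forall k, (k < a \/ b < k) -> P k = 0.

Definition is_Phi (n m : 'rV[int]_r) (P : int -> R[i]) : Prop :=
  [/\ supported (- vabs m) (vabs n) P, P (vabs n) = 1 &
      forall j k, - ent m j <= k <= ent n j - 1 ->
        Lapp j (- vabs m) (vabs n) P k = 0].

Definition is_PhiStar (n m : 'rV[int]_r) (P : int -> R[i]) : Prop :=
  [/\ supported (- vabs m) (vabs n) P, P (- vabs m) = 1 &
      forall j k, - ent m j + 1 <= k <= ent n j ->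
        Lapp j (- vabs m) (vabs n) P k = 0].

Definition is_Xi (n m : 'rV[int]_r) (X : 'I_r -> int -> R[i]) : Prop :=
  [/\ forall j, supported (- ent n j) (ent m j - 1) (X j),
      forall k, - vabs n + 1 <= k <= vabs m - 1 ->
        \sum_(j < r) Lapp j (- ent n j) (ent m j - 1) (X j) k = 0 &
      \sum_(j < r) Lapp j (- ent n j) (ent m j - 1) (X j) (- vabs n) = 1].

Definition is_XiStar (n m : 'rV[int]_r) (X : 'I_r -> int -> R[i]) : Prop :=
  [/\ forall j, supported (- ent n j + 1) (ent m j) (X j),
      forall k, - vabs n + 1 <= k <= vabs m - 1 ->
        \sum_(j < r) Lapp j (- ent n j + 1) (ent m j) (X j) k = 0 &
      \sum_(j < r) Lapp j (- ent n j + 1) (ent m j) (X j) (vabs m) = 1].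

Definition one_lp : int -> R[i] := fun k => (k == 0)%:R.

(* The unique objects (uniqueness holds for normal indices); chosen by
   Hilbert's epsilon, with the paper's convention for n = -m. *)
Definition Phi (n m : 'rV[int]_r) : int -> R[i] :=
  if n == - m then one_lp else epsilon (inhabits one_lp) (is_Phi n m).
Definition PhiStar (n m : 'rV[int]_r) : int -> R[i] :=
  if n == - m then one_lp else epsilon (inhabits one_lp) (is_PhiStar n m).
Definition Xi (n m : 'rV[int]_r) : 'I_r -> int -> R[i] :=
  if n == - m then (fun _ _ => 0)
  else epsilon (inhabits (fun _ _ => 0)) (is_Xi n m).
Definition XiStar (n m : 'rV[int]_r) : 'I_r -> int -> R[i] :=
  if n == - m then (fun _ _ => 0)
  else epsilon (inhabits (fun _ _ => 0)) (is_XiStar n m).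

Definition plo (n m : 'rV[int]_r) : int := if n == - m then 0 else - vabs m.
Definition phi_ (n m : 'rV[int]_r) : int := if n == - m then 0 else vabs n.

Definition LPhi (j : 'I_r) (n m : 'rV[int]_r) (k : int) : R[i] :=
  Lapp j (plo n m) (phi_ n m) (Phi n m) k.
Definition LPhiStar (j : 'I_r) (n m : 'rV[int]_r) (k : int) : R[i] :=
  Lapp j (plo n m) (phi_ n m) (PhiStar n m) k.

Definition alpha (n m : 'rV[int]_r) : R[i] := Phi n m (- vabs m).
Definition beta (n m : 'rV[int]_r) : R[i] := PhiStar n m (vabs n).

Definition rho (n m : 'rV[int]_r) (j : 'I_r) : R[i] :=
  LPhi j n m (ent n j) / LPhi j (n - evec j) m (ent n j - 1).
Definition sigma (n m : 'rV[int]_r) (j : 'I_r) : R[i] :=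
  LPhiStar j n m (- ent m j) / LPhiStar j n (m - evec j) (- ent m j + 1).
Definition gammaR (k l : 'I_r) (n m : 'rV[int]_r) : R[i] :=
  LPhi l (n + evec k) m (ent n l) / LPhi l n m (ent n l).
Definition etaR (k l : 'I_r) (n m : 'rV[int]_r) : R[i] :=
  LPhiStar l n (m + evec k) (- ent m l) / LPhiStar l n m (- ent m l).

End Defs.

From mathcomp Require Import all_boot all_order all_algebra.
From mathcomp Require Import complex.
From mathcomp Require Import reals.
From mathcomp Require Import zify.
From Stdlib Require Import ClassicalEpsilon.
Import Order.TTheory GRing.Theory Num.Theory.
Local Open Scope ring_scope.
Set Implicit Arguments.
Unset Strict Implicit.

(* Reflection z -> 1/z (coefficient i -> -i) preserves every L_j, since
   L_j[w^k] = L_j[w^-k]; it carries the orthogonality conditions defining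
   Phi*_{n;m} and Xi*_{n;m} exactly onto those defining Phi_{m;n} and Xi_{m;n}.
   Normality of (n;m) means that T_{n;m} has trivial kernel: the only D
   supported on [-|m|, |n|-1] with L_j[D(w) w^-k] = 0 for all rows (j,k) is 0.
   The map D(z) -> z^-1 D(1/z) exchanges these kernels for (n;m) and (m;n),
   so normality is symmetric.  Invertibility of T gives existence and
   uniqueness of Phi and Xi, which identifies the objects picked by the
   definitions; alpha = beta, rho = sigma and gamma = eta then follow by
   evaluating coefficients and the moments L_j[Phi(w) w^-k]. *)

Lemma mem_irange (a b k : int) : (k \in irange a b) = (a <= k <= b).
Proof.
rewrite /irange; case: ifP => hab.
  by rewrite in_nil; apply/esym/negbTE; apply/negP => /andP[]; lia.
apply/mapP/idP => [[t] | /andP[ak kb]].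
  by rewrite mem_iota => /andP[_ ht] ->; apply/andP; split; lia.
by exists (absz (k - a)); [rewrite mem_iota | ]; lia.
Qed.

Lemma uniq_irange (a b : int) : uniq (irange a b).
Proof.
rewrite /irange; case: ifP => // _.
by rewrite map_inj_uniq ?iota_uniq // => x y /addrI [].
Qed.

Lemma size_irange (a b : int) : a <= b + 1 -> size (irange a b) = absz (b - a + 1).
Proof.
move=> h; rewrite /irange; case: ifP => hab /=; first by lia.
rewrite size_map size_iota; lia.
Qed.

Lemma nth_irange (a b : int) (t : nat) :
  (t < size (irange a b))%N -> nth 0 (irange a b) t = a + t%:Z.
Proof.
rewrite /irange; case: ifP => _ ht; first by move: ht; rewrite ltn0.
move: ht; rewrite size_map size_iota => ht.
by rewrite (nth_map 0%N) ?size_iota // nth_iota.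
Qed.

Lemma irange_rcons (a b : int) : a <= b -> irange a b = rcons (irange a (b - 1)) b.
Proof.
move=> hab; rewrite /irange ifF; last by lia.
case: ifP => hb.
  by rewrite (_ : absz (b - a) = 0%N) /=; [congr [:: _] | ]; lia.
rewrite (_ : absz (b - a) = (absz (b - 1 - a)%R).+1); last by lia.
by rewrite -addn1 iotaD map_cat cats1 /=; congr (_ :: rcons _ _); lia.
Qed.

Lemma perm_irange_reflect (a b c : int) :
  perm_eq (irange (c - b) (c - a)) [seq c - i | i <- irange a b].
Proof.
apply: uniq_perm; first exact: uniq_irange.
  by rewrite map_inj_uniq ?uniq_irange // => x y /= h; lia.
move=> x; apply/idP/mapP => [|[y]].
  by rewrite mem_irange => h; exists (c - x); [rewrite mem_irange|]; lia.
by rewrite !mem_irange => hy ->; lia.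
Qed.

Definition fun_of_row (T : eqType) (V : nmodType) (x0 : T) (s : seq T) (N : nat)
    (v : 'rV[V]_N) : T -> V :=
  fun x => \sum_(a < N | x == nth x0 s a) v 0 a.

Section FunOfRow.
Variables (T : eqType) (V : nmodType) (x0 : T) (s : seq T) (N : nat).
Hypothesis size_s : size s = N.

Lemma fun_of_row_nth (v : 'rV[V]_N) (a : 'I_N) :
  uniq s -> fun_of_row x0 s v (nth x0 s a) = v 0 a.
Proof.
move=> us; rewrite /fun_of_row (big_pred1 a) // => b /=.
by rewrite nth_uniq ?size_s // eq_sym.
Qed.

Lemma fun_of_row_notin (v : 'rV[V]_N) x : x \notin s -> fun_of_row x0 s v x = 0.
Proof.
move=> xs; rewrite /fun_of_row big_pred0 // => a.
by apply: contraNF xs => /eqP ->; rewrite mem_nth ?size_s.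
Qed.

End FunOfRow.

Lemma inC2r_sym (r : nat) (n m : 'rV[int]_r) : inC2r n m -> inC2r m n.
Proof. by move=> h j; rewrite addrC. Qed.

Lemma inC2r_add_evec (r : nat) (n m : 'rV[int]_r) k : inC2r n m -> inC2r (n + evec k) m.
Proof.
move=> h j; rewrite /ent /evec !mxE addrAC; apply: addr_ge0; first exact: h.
exact: ler0n.
Qed.

Section MomentMatrix.
Variables (R : realType) (r : nat) (L : 'I_r -> int -> R[i]).
Hypothesis L_even : forall j z, L j z = L j (- z).

Lemma Lapp_recr j a b P k : a <= b ->
  Lapp L j a b P k = Lapp L j a (b - 1) P k + P b * L j (b - k).
Proof. by move=> hab; rewrite /Lapp irange_rcons // -cats1 big_cat big_seq1. Qed.

Lemma Lapp_sub j a b P Q k :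
  Lapp L j a b (fun i => P i - Q i) k = Lapp L j a b P k - Lapp L j a b Q k.
Proof. by rewrite /Lapp -sumrB; apply: eq_bigr => i _; rewrite mulrBl. Qed.

Lemma Lapp_reflect j a b c P Q k : (forall i, Q i = P (c - i)) ->
  Lapp L j a b P k = Lapp L j (c - b) (c - a) Q (c - k).
Proof.
move=> hQ; rewrite /Lapp (perm_big _ (perm_irange_reflect a b c)) big_map.
by apply: eq_bigr => i _; rewrite hQ L_even; congr (P _ * L j _); lia.
Qed.

Lemma Lapp_opp j a b P Q k : (forall i, Q i = P (- i)) ->
  Lapp L j a b P k = Lapp L j (- b) (- a) Q (- k).
Proof.
move=> hQ; rewrite (@Lapp_reflect j a b 0 P Q k) ?sub0r // => i.
by rewrite sub0r.
Qed.

Lemma TrowsE (n m : 'rV[int]_r) :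
  Trows n m = [seq (j, k) | j <- enum 'I_r, k <- irange (- ent m j) (ent n j - 1)].
Proof. by []. Qed.

Lemma mem_Trows (n m : 'rV[int]_r) j k :
  ((j, k) \in Trows n m) = (- ent m j <= k <= ent n j - 1).
Proof.
rewrite TrowsE; apply/allpairsPdep/idP => [[j' [k'] [_ hk [-> ->]]] | h].
  by rewrite -mem_irange.
by exists j, k; rewrite mem_enum mem_irange.
Qed.

Lemma uniq_Trows (n m : 'rV[int]_r) : uniq (Trows n m).
Proof.
rewrite TrowsE; apply: allpairs_uniq_dep => [|j _|]; rewrite ?enum_uniq ?uniq_irange //.
by move=> [j1 k1] [j2 k2] _ _ [-> ->].
Qed.

Definition Tcols (n m : 'rV[int]_r) : seq int := irange (- vabs m) (vabs n - 1).

Definition in_Tkernel (n m : 'rV[int]_r) (D : int -> R[i]) : Prop :=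
  forall j k, - ent m j <= k <= ent n j - 1 ->
    Lapp L j (- vabs m) (vabs n - 1) D k = 0.

Variable x0 : 'I_r * int.

Section IndexPair.
Variables n m : 'rV[int]_r.
Hypothesis nm_C2r : inC2r n m.

Local Notation N := (Tsize n m).
Local Notation Trow a := (nth x0 (Trows n m) a).

Lemma Tsize_vabs : N%:Z = vabs n + vabs m.
Proof.
have : 0 <= vabs n + vabs m.
  by rewrite /vabs -big_split; apply: sumr_ge0 => j _; exact: nm_C2r.
by rewrite /Tsize; lia.
Qed.

Lemma Tsize_eq0 : (N == 0%N) = (n == - m).
Proof.
apply/idP/eqP => [/eqP N0 | nm].
  have : vabs n + vabs m = 0 by rewrite -Tsize_vabs N0.
  rewrite /vabs -big_split /= => /eqP; rewrite psumr_eq0 => [/allP n_m|j _]; last first.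
    exact: nm_C2r.
  apply/rowP => j; rewrite mxE; apply/eqP; rewrite -addr_eq0.
  exact: n_m j (mem_index_enum j).
rewrite /Tsize /vabs nm; under eq_bigr do rewrite /ent mxE.
by rewrite sumrN addNr.
Qed.

Lemma size_Trows : size (Trows n m) = N.
Proof.
apply/eqP; rewrite -eqz_nat Tsize_vabs TrowsE size_allpairs_dep sumnE big_map.
rewrite -natz natr_sum big_enum /= /vabs -big_split /=; apply/eqP/eq_bigr => j _.
have hj := nm_C2r j; rewrite size_irange ?natz; lia.
Qed.

Lemma size_Tcols : size (Tcols n m) = N.
Proof. move: Tsize_vabs => hz; rewrite /Tcols size_irange; lia. Qed.

Lemma nth_Tcols (b : nat) : (b < N)%N -> nth 0 (Tcols n m) b = - vabs m + b%:Z.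
Proof. by move=> hb; rewrite nth_irange ?size_Tcols. Qed.

Lemma Trow_bounds (a : 'I_N) : - ent m (Trow a).1 <= (Trow a).2 <= ent n (Trow a).1 - 1.
Proof.
have : Trow a \in Trows n m by rewrite mem_nth ?size_Trows.
by case: (Trow a) => j k; rewrite mem_Trows.
Qed.

Lemma Trows_index j k : - ent m j <= k <= ent n j - 1 -> (index (j, k) (Trows n m) < N)%N.
Proof. by move=> h; rewrite -size_Trows index_mem mem_Trows. Qed.

Lemma Tmat_nth (a b : 'I_N) :
  Tmat L n m a b = L (Trow a).1 (- vabs m + b%:Z - (Trow a).2).
Proof.
rewrite mxE onthE (nth_map x0) ?size_Trows //.
by case: (Trow a) => j k /=; rewrite /cmom; congr (L j _); lia.
Qed.

Lemma mul_row_Tmat_tr (D : int -> R[i]) (a : 'I_N) :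
  (\row_(b < N) D (- vabs m + b%:Z) *m (Tmat L n m)^T) 0 a =
  Lapp L (Trow a).1 (- vabs m) (vabs n - 1) D (Trow a).2.
Proof.
rewrite mxE /Lapp -[irange _ _]/(Tcols n m) (big_nth 0) size_Tcols big_mkord.
by apply: eq_bigr => b _; rewrite mxE [X in _ * X]mxE Tmat_nth nth_Tcols.
Qed.

Lemma Lapp_Tmat_tr (D : int -> R[i]) j k (jk : - ent m j <= k <= ent n j - 1) :
  Lapp L j (- vabs m) (vabs n - 1) D k =
  (\row_(b < N) D (- vabs m + b%:Z) *m (Tmat L n m)^T) 0 (Ordinal (Trows_index jk)).
Proof. by rewrite mul_row_Tmat_tr /= nth_index ?mem_Trows. Qed.

Lemma mul_row_Tmat (X : 'I_r -> int -> R[i]) (b : 'I_N) :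
  (\row_(a < N) X (Trow a).1 (Trow a).2 *m Tmat L n m) 0 b =
  \sum_(j < r) Lapp L j (- ent m j) (ent n j - 1) (X j) (- vabs m + b%:Z).
Proof.
rewrite mxE; transitivity
    (\sum_(p <- Trows n m) X p.1 p.2 * L p.1 (- vabs m + b%:Z - p.2)).
  rewrite (big_nth x0) size_Trows big_mkord.
  by apply: eq_bigr => a _; rewrite mxE Tmat_nth.
rewrite TrowsE big_allpairs_dep big_enum /=; apply: eq_bigr => j _.
by apply: eq_bigr => k _; rewrite L_even; congr (_ * L j _); lia.
Qed.

Lemma normalE : normal L n m <-> \det (Tmat L n m) != 0.
Proof.
rewrite /normal; case: eqP => [nm|//].
have N0 : N = 0%N by apply/eqP; rewrite Tsize_eq0 nm.
move: (Tmat L n m); rewrite N0 => A.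
by rewrite det_mx00 oner_neq0.
Qed.

Lemma normal_kernelP : normal L n m <->
  forall D, in_Tkernel n m D -> forall i, - vabs m <= i <= vabs n - 1 -> D i = 0.
Proof.
have hz := Tsize_vabs; rewrite normalE -det_tr.
split => [det_neq0 D kerD i hi | kerT].
  have unitT : (Tmat L n m)^T \in unitmx by rewrite unitmxE unitfE.
  set v := \row_(b < N) D (- vabs m + b%:Z).
  have v0 : v *m (Tmat L n m)^T = 0.
    by apply/rowP => a; rewrite mul_row_Tmat_tr mxE kerD ?Trow_bounds.
  have hb : (absz (i + vabs m)%R < N)%N by lia.
  have := congr1 (fun w : 'rV[R[i]]_N => w 0 (Ordinal hb)) (mulmxK unitT v).
  rewrite v0 mul0mx !mxE /= => /esym; congr (D _ = _); lia.
apply/negP => /det0P [v /negP v_neq0 v0]; apply: v_neq0; apply/eqP/rowP => b.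
set D := fun_of_row 0 (Tcols n m) v.
have Dv : \row_(b < N) D (- vabs m + b%:Z) = v.
  apply/rowP => b'; rewrite mxE -nth_Tcols //.
  by rewrite /D fun_of_row_nth ?size_Tcols ?uniq_irange.
rewrite -Dv !mxE kerT //; last by have := ltn_ord b; lia.
by move=> j k jk; rewrite Lapp_Tmat_tr Dv v0 mxE.
Qed.

Lemma Phi_exists : normal L n m -> exists P, is_Phi L n m P.
Proof.
move=> /normalE det_neq0; have hz := Tsize_vabs.
have unitT : (Tmat L n m)^T \in unitmx by rewrite unitmxE det_tr unitfE.
set y := \row_(a < N) - L (Trow a).1 (vabs n - (Trow a).2) *m invmx (Tmat L n m)^T.
pose P i := (i == vabs n)%:R + fun_of_row 0 (Tcols n m) y i.
have Pn : P (vabs n) = 1.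
  rewrite /P eqxx fun_of_row_notin ?addr0 ?size_Tcols // mem_irange.
  by apply/negP => /andP[]; lia.
have Py : \row_(b < N) P (- vabs m + b%:Z) = y.
  apply/rowP => b; have := ltn_ord b => hb.
  rewrite mxE /P (_ : (_ == vabs n) = false) ?add0r; last by lia.
  by rewrite -nth_Tcols // fun_of_row_nth ?size_Tcols ?uniq_irange.
exists P; split => // [k hk | j k jk].
  rewrite /P (_ : (k == vabs n) = false) ?add0r; last by lia.
  by rewrite fun_of_row_notin ?size_Tcols // mem_irange; apply/negP => /andP[]; lia.
rewrite Lapp_recr; last by lia.
by rewrite Pn mul1r Lapp_Tmat_tr Py mulmxKV // mxE /= nth_index ?mem_Trows //= addNr.
Qed.

Lemma Phi_unique P Q : normal L n m -> is_Phi L n m P -> is_Phi L n m Q -> P =1 Q.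
Proof.
move=> /normal_kernelP kerT [sP P1 eP] [sQ Q1 eQ] i; have hz := Tsize_vabs.
have kerPQ : in_Tkernel n m (fun i => P i - Q i).
  move=> j k jk; have mn : - vabs m <= vabs n by lia.
  move: (eP j k jk) (eQ j k jk); rewrite !(@Lapp_recr j _ _ _ k mn) P1 Q1 => eP' eQ'.
  rewrite Lapp_sub; apply/eqP; rewrite subr_eq0; apply/eqP.
  by apply: (addIr (1 * L j (vabs n - k))); rewrite eP' eQ'.
have [hi|hi] := boolP (- vabs m <= i <= vabs n - 1).
  by apply/eqP; rewrite -subr_eq0; apply/eqP; exact: kerT kerPQ i hi.
have [->|hin] := eqVneq i (vabs n); first by rewrite P1 Q1.
by rewrite sP ?sQ //; lia.
Qed.

Lemma is_Xi_Tmat X : n != - m -> (forall j, supported (- ent m j) (ent n j - 1) (X j)) ->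
  is_Xi L m n X <->
  \row_(a < N) X (Trow a).1 (Trow a).2 *m Tmat L n m = \row_(c < N) ((c : nat) == 0%N)%:R.
Proof.
move=> nm sX; have hz := Tsize_vabs.
have N_gt0 : (0 < N)%N by rewrite lt0n Tsize_eq0.
have col_gt0 (c : 'I_N) : c != 0%N :> nat -> - vabs m + 1 <= - vabs m + c%:Z <= vabs n - 1.
  by have := ltn_ord c; lia.
have col_of k : - vabs m + 1 <= k <= vabs n - 1 ->
    exists2 c : 'I_N, - vabs m + c%:Z = k & c != 0%N :> nat.
  move=> hk; have hc : (absz (k + vabs m)%R < N)%N by lia.
  by exists (Ordinal hc) => /=; lia.
split => [[_ X0 X1] | XT].
  apply/rowP => c; rewrite mul_row_Tmat mxE.
  have [->|c_neq0] := eqVneq (c : nat) 0%N; first by rewrite addr0 X1.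
  by rewrite X0 ?col_gt0.
split => // [k /col_of [c <- c_neq0]|].
  have := congr1 (fun w : 'rV[R[i]]_N => w 0 c) XT.
  by rewrite mul_row_Tmat mxE (negbTE c_neq0).
have := congr1 (fun w : 'rV[R[i]]_N => w 0 (Ordinal N_gt0)) XT.
by rewrite mul_row_Tmat mxE /= addr0.
Qed.

Lemma Xi_exists : n != - m -> normal L n m -> exists X, is_Xi L m n X.
Proof.
move=> nm /normalE det_neq0; have unitT : Tmat L n m \in unitmx by rewrite unitmxE unitfE.
set y := \row_(c < N) ((c : nat) == 0%N)%:R *m invmx (Tmat L n m).
pose X j k := fun_of_row x0 (Trows n m) y (j, k).
have sX j : supported (- ent m j) (ent n j - 1) (X j).
  move=> k hk; rewrite /X fun_of_row_notin ?size_Trows // mem_Trows negb_and -!ltNge.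
  exact/orP.
exists X; apply/(is_Xi_Tmat nm sX).
have -> : \row_(a < N) X (Trow a).1 (Trow a).2 = y.
  apply/rowP => a.
  by rewrite mxE /X -surjective_pairing fun_of_row_nth ?size_Trows ?uniq_Trows.
by rewrite mulmxKV.
Qed.

Lemma Xi_unique X Y : n != - m -> normal L n m ->
  is_Xi L m n X -> is_Xi L m n Y -> forall j, X j =1 Y j.
Proof.
move=> nm /normalE det_neq0 hX hY j k.
have unitT : Tmat L n m \in unitmx by rewrite unitmxE unitfE.
have [sX _ _] := hX; have [sY _ _] := hY.
move/(is_Xi_Tmat nm sX): hX => XT; move/(is_Xi_Tmat nm sY): hY => YT.
have XY : \row_(a < N) X (Trow a).1 (Trow a).2 = \row_(a < N) Y (Trow a).1 (Trow a).2.
  by rewrite -[LHS](mulmxK unitT) XT -YT mulmxK.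
have [jk|jk] := boolP (- ent m j <= k <= ent n j - 1).
  have := congr1 (fun w : 'rV[R[i]]_N => w 0 (Ordinal (Trows_index jk))) XY.
  by rewrite !mxE /= nth_index ?mem_Trows.
by move: jk; rewrite negb_and -!ltNge => /orP jk; rewrite sX ?sY.
Qed.

End IndexPair.

Lemma in_Tkernel_reflect n m D : in_Tkernel m n D -> in_Tkernel n m (fun i => D (-1 - i)).
Proof.
move=> kerD j k jk; have jk' : - ent n j <= -1 - k <= ent m j - 1 by lia.
rewrite (@Lapp_reflect j _ _ (-1) _ D k) => [|z]; last by rewrite opprB addrC subrK.
by rewrite -(kerD j (-1 - k) jk'); congr Lapp; lia.
Qed.

Lemma normal_sym n m : inC2r n m -> normal L n m -> normal L m n.
Proof.
move=> nm_C2r /(normal_kernelP nm_C2r) kerT.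
apply/(normal_kernelP (inC2r_sym nm_C2r)) => D /in_Tkernel_reflect kerD i hi.
have hi' : - vabs m <= -1 - i <= vabs n - 1 by lia.
by have := kerT _ kerD _ hi'; rewrite opprB addrC subrK.
Qed.

Lemma is_PhiStar_Phi n m P Q : (forall i, Q i = P (- i)) ->
  is_PhiStar L n m P <-> is_Phi L m n Q.
Proof.
move=> QP; have PQ i : P i = Q (- i) by rewrite QP opprK.
split => [[sP P1 eP] | [sQ Q1 eQ]]; split.
- by move=> k hk; rewrite QP sP //; lia.
- by rewrite QP P1.
- by move=> j k hk; rewrite (@Lapp_opp j _ _ Q P k PQ) opprK eP //; lia.
- by move=> k hk; rewrite PQ sQ //; lia.
- by rewrite PQ opprK Q1.
- by move=> j k hk; rewrite (@Lapp_opp j _ _ P Q k QP) opprK eQ //; lia.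
Qed.

Lemma is_XiStar_Xi n m Y X : (forall j i, X j i = Y j (- i)) ->
  is_XiStar L n m Y <-> is_Xi L m n X.
Proof.
move=> XY; have YX j i : Y j i = X j (- i) by rewrite XY opprK.
have sumY k : \sum_(j < r) Lapp L j (- ent n j + 1) (ent m j) (Y j) k =
              \sum_(j < r) Lapp L j (- ent m j) (ent n j - 1) (X j) (- k).
  apply: eq_bigr => j _; rewrite (@Lapp_opp j _ _ (Y j) (X j) k (XY j)).
  by congr Lapp; lia.
split => [[sY Y0 Y1] | [sX X0 X1]]; split.
- by move=> j k hk; rewrite XY sY //; lia.
- by move=> k hk; rewrite -[k]opprK -sumY Y0 //; lia.
- by rewrite -sumY.
- by move=> j k hk; rewrite YX sX //; lia.
- by move=> k hk; rewrite sumY X0 //; lia.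
- by rewrite sumY.
Qed.

Lemma PhiStar_eq_Phi n m : inC2r n m -> normal L n m ->
  forall k, PhiStar L n m k = Phi L m n (- k).
Proof.
move=> nm_C2r nmN k; have [nm|nm] := eqVneq n (- m).
  by rewrite /PhiStar /Phi nm opprK !eqxx /one_lp oppr_eq0.
have mn : m != - n by rewrite eq_sym eqr_oppLR.
have mnN := normal_sym nm_C2r nmN.
have PhiP : is_Phi L m n (Phi L m n).
  rewrite /Phi (negbTE mn); apply: epsilon_spec.
  exact: Phi_exists (inC2r_sym nm_C2r) mnN.
have PhiStarP : is_PhiStar L n m (PhiStar L n m).
  rewrite /PhiStar (negbTE nm); apply: epsilon_spec; exists (fun i => Phi L m n (- i)).
  by apply/(@is_PhiStar_Phi n m _ (Phi L m n)) => // i; rewrite opprK.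
have /(@is_PhiStar_Phi n m _ (fun i => PhiStar L n m (- i)) (fun i => erefl)) PhiP'
  := PhiStarP.
by rewrite -(Phi_unique (inC2r_sym nm_C2r) mnN PhiP' PhiP) opprK.
Qed.

Lemma XiStar_eq_Xi n m : inC2r n m -> normal L n m ->
  forall j k, XiStar L n m j k = Xi L m n j (- k).
Proof.
move=> nm_C2r nmN j k; have [nm|nm] := eqVneq n (- m).
  by rewrite /XiStar /Xi nm opprK !eqxx.
have mn : m != - n by rewrite eq_sym eqr_oppLR.
have XiP : is_Xi L m n (Xi L m n).
  by rewrite /Xi (negbTE mn); apply: epsilon_spec; exact: Xi_exists.
have XiStarP : is_XiStar L n m (XiStar L n m).
  rewrite /XiStar (negbTE nm); apply: epsilon_spec; exists (fun j i => Xi L m n j (- i)).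
  by apply/(@is_XiStar_Xi n m _ (Xi L m n)) => // j' i; rewrite opprK.
have /(@is_XiStar_Xi n m _ (fun j i => XiStar L n m j (- i)) (fun j i => erefl)) XiP'
  := XiStarP.
by rewrite -(Xi_unique nm_C2r nm nmN XiP' XiP) opprK.
Qed.

Lemma LPhiStar_eq_LPhi n m j k : inC2r n m -> normal L n m ->
  LPhiStar L j m n k = LPhi L j n m (- k).
Proof.
move=> nm_C2r nmN; rewrite /LPhiStar (@Lapp_opp j _ _ _ (Phi L n m) k); last first.
  by move=> i; rewrite (PhiStar_eq_Phi (inC2r_sym nm_C2r) (normal_sym nm_C2r nmN)) opprK.
rewrite /LPhi /plo /phi_ [m == _]eq_sym eqr_oppLR.
by case: (n == - m); rewrite ?oppr0 ?opprK.
Qed.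

End MomentMatrix.

Theorem proposition10p1 (R : realType) (r : nat) (L : 'I_r -> int -> R[i]) :
  (0 < r)%N ->
  (forall (j : 'I_r) (k : nat), L j (k%:Z) = L j (- (k%:Z))) ->
  forall n m : 'rV[int]_r, inC2r n m ->
  (normal L n m <-> normal L m n) /\
  (normal L n m ->
     (forall k : int, PhiStar L n m k = Phi L m n (- k)) /\
     (forall (j : 'I_r) (k : int), XiStar L n m j k = Xi L m n j (- k)) /\
     alpha L n m = beta L m n /\
     (forall j : 'I_r, inC2r (n - evec j) m -> normal L (n - evec j) m ->
        rho L n m j = sigma L m n j) /\
     (forall k l : 'I_r, k != l ->
        normal L (n + evec k) m -> normal L (n + evec l) m ->
        gammaR L k l n m = etaR L k l m n)).
Proof.
move=> r_gt0 L_nat_even n m nm_C2r.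
have L_even j z : L j z = L j (- z).
  by case: z => k; rewrite ?L_nat_even // NegzE opprK L_nat_even.
pose x0 := (Ordinal r_gt0, 0 : int).
have mn_C2r := inC2r_sym nm_C2r.
split; first by split; apply: (normal_sym L_even x0).
move=> nmN; have mnN := normal_sym L_even x0 nm_C2r nmN.
split; first exact: PhiStar_eq_Phi.
split; first exact: XiStar_eq_Xi.
split; first by rewrite /alpha /beta (PhiStar_eq_Phi L_even x0 mn_C2r mnN).
split => [j nj_C2r njN | k l _ nkN _].
  by rewrite /rho /sigma !(LPhiStar_eq_LPhi L_even x0) // opprD !opprK.
by rewrite /gammaR /etaR !(LPhiStar_eq_LPhi L_even x0) ?opprK //; apply: inC2r_add_evec.
Qed.
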